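(* Let the random permutation $\sigma$ be uniformly distributed on the symmetric group $S_N$, and let $l\ge 1$ be an integer. Then $$\mathrm{Ex}\big[C_\sigma^{\underline{l}}\big] = (-1)^l\, Z_l\big(-\zeta_N(1), -\zeta_N(2), \ldots, -\zeta_N(l)\big),$$ where $$Z_l(g_1,\ldots,g_l) = \sum_{\substack{n_1\ge0,\ldots,n_l\ge 0\\ n_1+2n_2+\cdots+ln_l=l}} \frac{l!\, g_1^{n_1}g_2^{n_2}\cdots g_l^{n_l}}{n_1!\,1^{n_1}\, n_2!\,2^{n_2}\cdots n_l!\,l^{n_l}}$$ and $\zeta_N(m)=\sum_{1\le n\le N} n^{-m}$.
   Context: For a permutation $\pi$ of $\{1,\ldots,N\}$, $C_\pi$ denotes the number of cycles of $\pi$; $\mathrm{Ex}$ denotes expectation. For a real number $x$, $x^{\underline{l}}=x(x-1)\cdots(x-l+1)$ denotes the $l$-th falling power. *)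

From mathcomp Require Import all_boot all_order all_fingroup all_algebra.
Set Implicit Arguments. Unset Strict Implicit. Unset Printing Implicit Defensive.
Import Order.TTheory GRing.Theory Num.Theory.
Local Open Scope ring_scope.

Definition ncycles (N : nat) (s : {perm 'I_N}) : nat := #|porbits s|.

Definition falling (R : pzRingType) (x : R) (l : nat) : R :=
  \prod_(i < l) (x - i%:R).

Definition Ex_unif (R : fieldType) (N : nat) (f : {perm 'I_N} -> R) : R :=
  (#|{perm 'I_N}|%:R)^-1 * \sum_(s : {perm 'I_N}) f s.

Definition zetaN (R : fieldType) (N m : nat) : R :=
  \sum_(1 <= n < N.+1) ((n%:R : R) ^+ m)^-1.

(* The tuple (n_1,...,n_l) is
   encoded by n : {ffun 'I_l -> 'I_l.+1} with n k = n_{k+1}; the bound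
   n_k <= l is automatic from n_1 + 2 n_2 + ... + l n_l = l. *)
Definition Zcyc (R : fieldType) (l : nat) (g : nat -> R) : R :=
  \sum_(n : {ffun 'I_l -> 'I_l.+1} | (\sum_(k < l) k.+1 * n k == l)%N)
     (l`!%:R * \prod_(k < l) g k.+1 ^+ n k
       / \prod_(k < l) ((n k)`!%:R * (k.+1)%:R ^+ n k)).

(* Inserting the new point of a permutation of 'I_N.+1 either as a fixed point
   or right after one of the N old points is a bijection
   S_N x 'I_N.+1 -> S_N.+1 that adds a cycle only in the first case.  With
   (x+1)^{\underline l} = x^{\underline l} + l x^{\underline{l-1}} this gives,
   by induction on N, E[C^{\underline l}] = (-1)^l l! [x^l] Q_N where
   Q_N(x) = \prod_{n<=N} (1 - x/n).  The logarithmic derivative of Q_N is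
   -\sum_k zeta_N(k+1) x^k, and Z_l(g)/l! is [x^l] of
   \prod_{k<=l} exp(g_k x^k / k), whose logarithmic derivative is
   \sum_k g_{k+1} x^k.  Both sides have constant term 1, so their coefficients
   agree up to degree l.  Truncating the exponentials at degree l keeps
   everything polynomial: the relation p' = G p is only needed below degree l. *)

From mathcomp Require Import all_boot all_order all_fingroup all_algebra.
From mathcomp Require Import zify ring.
Import GRing.Theory Num.Theory.

Set Implicit Arguments.
Unset Strict Implicit.
Unset Printing Implicit Defensive.

Lemma ncycles_mul_tperm n (s : {perm 'I_n}) x y :
  ncycles (tperm x y * s)%g + (x \notin porbit s y).*2 = ncycles s + (x != y).
Proof. exact: porbits_mul_tperm. Qed.

Section InsertMax.
Variable N : nat.
Implicit Types (s : {perm 'I_N}) (x : 'I_N).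

Local Notation extend s := (lift_perm ord_max ord_max s).

Lemma lift_permX_lift s i x :
  (extend s ^+ i)%g (lift ord_max x) = lift ord_max ((s ^+ i)%g x).
Proof. by rewrite !permX; elim: i => //= i ->; rewrite lift_perm_lift. Qed.

Lemma porbit_lift_perm s x :
  porbit (extend s) (lift ord_max x) = lift ord_max @: porbit s x.
Proof.
apply/setP => y; apply/porbitP/imsetP => [[i ->] | [_ /porbitP[i ->] ->]].
  by exists ((s ^+ i)%g x); rewrite ?mem_porbit ?lift_permX_lift.
by exists i; rewrite lift_permX_lift.
Qed.

Lemma porbit_lift_perm_max s : porbit (extend s) ord_max = [set ord_max].
Proof.
apply/setP => y; rewrite inE; apply/porbitP/eqP => [[i ->] | ->].
  by rewrite permX_fix // lift_perm_id.
by exists 0%N; rewrite perm1.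
Qed.

Lemma porbits_lift_perm s :
  porbits (extend s) = [set ord_max] |: [set lift ord_max @: A | A : {set 'I_N} in porbits s].
Proof.
apply/setP => B; rewrite !inE; apply/imsetP/orP => [[y _ ->] | ].
  case: (unliftP ord_max y) => [x|] ->; last by left; rewrite porbit_lift_perm_max.
  by right; rewrite porbit_lift_perm imset_f ?imset_f.
case=> [/eqP-> | /imsetP[_ /imsetP[x _ ->] ->]].
  by exists ord_max; rewrite ?porbit_lift_perm_max.
by exists (lift ord_max x); rewrite ?porbit_lift_perm.
Qed.

Lemma ncycles_lift_perm s : ncycles (extend s) = (ncycles s).+1.
Proof.
rewrite /ncycles porbits_lift_perm cardsU1 (card_imset _ (imset_inj (@lift_inj _ _))).
suff /negbTE-> : [set ord_max] \notin [set lift ord_max @: A | A : {set 'I_N} in porbits s] by [].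
apply/imsetP => -[A _ /setP/(_ ord_max)]; rewrite inE eqxx.
by move=> /esym/imsetP[x _ /eqP]; rewrite (negbTE (neq_lift _ _)).
Qed.

(* [insert_max (s, j)] inserts the new point [ord_max] into the cycle of [s]
   right after [j], or as a new fixed point if [j = ord_max]. *)
Definition insert_max (p : {perm 'I_N} * 'I_N.+1) : {perm 'I_N.+1} :=
  (tperm ord_max p.2 * extend p.1)%g.

Lemma insert_max_inj : injective insert_max.
Proof.
move=> [s1 j1] [s2 j2]; rewrite /insert_max /= => E.
have to_max s j : (tperm ord_max j * extend s)%g j = ord_max.
  by rewrite permM tpermR lift_perm_id.
have ej : j1 = j2 by apply: (@perm_inj _ (tperm ord_max j1 * extend s1)%g); rewrite {2}E !to_max.
subst j2; move/mulgI: E => E; congr pair; apply/permP => x; apply: (@lift_inj _ ord_max).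
by rewrite -!(lift_perm_lift ord_max) E.
Qed.

Lemma insert_max_bij : bijective insert_max.
Proof.
apply: inj_card_bij; first exact: insert_max_inj.
by rewrite card_prod !card_Sn card_ord factS mulnC.
Qed.

Lemma ncycles_insert_max s j :
  ncycles (insert_max (s, j)) = ncycles s + (j == ord_max).
Proof.
have := ncycles_mul_tperm (extend s) ord_max j.
have -> : (ord_max \notin porbit (extend s) j) = (j != ord_max).
  by rewrite porbit_sym porbit_lift_perm_max inE.
rewrite -[(tperm _ _ * _)%g]/(insert_max (s, j)) ncycles_lift_perm eq_sym.
by case: eqP => _ /=; lia.
Qed.

Local Open Scope ring_scope.

Lemma sum_perm_ncyclesS (V : nmodType) (f : nat -> V) :
  \sum_(s : {perm 'I_N.+1}) f (ncycles s) =
  \sum_(s : {perm 'I_N}) (f (ncycles s).+1 + f (ncycles s) *+ N).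
Proof.
rewrite (reindex insert_max); last exact/onW_bij/insert_max_bij.
rewrite -(pair_bigA _ (fun s j => f (ncycles (insert_max (s, j))))) /=.
apply: eq_bigr => s _; rewrite (bigD1 ord_max) //= ncycles_insert_max eqxx addn1.
congr (_ + _); rewrite (eq_bigr (fun _ => f (ncycles s))); last first.
  by move=> j /negbTE jP; rewrite ncycles_insert_max jP addn0.
by rewrite sumr_const cardC1 card_ord.
Qed.

End InsertMax.

Local Open Scope ring_scope.

Section Falling.
Variable R : comNzRingType.

Lemma falling0n l : falling (0 : R) l = (l == 0)%:R.
Proof. by case: l => [|l]; rewrite /falling ?big_ord0 // big_ord_recl subrr mul0r. Qed.

Lemma fallingD1 (x : R) l : falling (x + 1) l = falling x l + l%:R * falling x l.-1.
Proof.
case: l => [|l]; first by rewrite /falling !big_ord0 mul0r addr0.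
rewrite /falling big_ord_recl big_ord_recr /=.
have -> : \prod_(i < l) (x + 1 - (bump 0 i)%:R) = \prod_(i < l) (x - i%:R).
  by apply: eq_bigr => i _; rewrite /bump /= add1n -natr1; ring.
by rewrite -natr1; ring.
Qed.

End Falling.

Section LogDerivUpto.
Variable R : comNzRingType.
Implicit Types (G p q r : {poly R}).

Definition eq_upto l p q := forall i, (i < l)%N -> p`_i = q`_i.

Lemma eq_uptoMr l p q r : eq_upto l p q -> eq_upto l (p * r) (q * r).
Proof.
move=> Epq i lt_il; rewrite !coefM; apply: eq_bigr => j _.
by rewrite Epq // (leq_ltn_trans (leq_ord j)).
Qed.

Definition logderiv_upto l G p := eq_upto l p^`() (G * p).

Lemma logderiv_upto1 l : logderiv_upto l 0 1.
Proof. by move=> i _; rewrite mul0r -polyC1 derivC. Qed.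

Lemma logderiv_uptoM l G1 G2 p q :
  logderiv_upto l G1 p -> logderiv_upto l G2 q -> logderiv_upto l (G1 + G2) (p * q).
Proof.
move=> Dp Dq i lt_il; rewrite derivM coefD (eq_uptoMr q Dp) // (mulrC p) (eq_uptoMr p Dq) // -coefD.
by rewrite mulrDl -!mulrA (mulrC q p).
Qed.

Lemma logderiv_upto_prod l (I : Type) (r : seq I) (P : pred I) (G F : I -> {poly R}) :
  (forall i, P i -> logderiv_upto l (G i) (F i)) ->
  logderiv_upto l (\sum_(i <- r | P i) G i) (\prod_(i <- r | P i) F i).
Proof.
move=> DF; apply: (big_ind2 (logderiv_upto l)) => //; first exact: logderiv_upto1.
by move=> *; apply: logderiv_uptoM.
Qed.

(* [\poly_(k < l) (- a ^+ k.+1)] is [-a / (1 - a X)] truncated at degree [l]. *)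
Lemma logderiv_upto_1subZX l (a : R) :
  logderiv_upto l (\poly_(k < l) (- a ^+ k.+1)) (1 - a *: 'X).
Proof.
move=> i lt_il; rewrite derivB derivZ derivX -polyC1 derivC sub0r.
rewrite mulrBr mulr1 -scalerAr coefB coefZ coefMX coef_poly lt_il coefN coefZ polyC1 coef1.
case: i lt_il => [|i] lt_il /=; first by rewrite mulr1 mulr0 subr0 expr1.
by rewrite coef_poly ltnW // exprS; ring.
Qed.

Lemma prodr_scaleXn (I : Type) (r : seq I) (a : I -> R) (m : I -> nat) :
  \prod_(i <- r) (a i *: 'X^(m i)) = (\prod_(i <- r) a i) *: 'X^(\sum_(i <- r) m i).
Proof.
elim: r => [|x r IHr]; first by rewrite !big_nil scale1r.
by rewrite !big_cons IHr -scalerAl -scalerAr scalerA exprD.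
Qed.

End LogDerivUpto.

Lemma logderiv_upto_eq (R : numDomainType) l (G p q : {poly R}) :
  logderiv_upto l G p -> logderiv_upto l G q -> p`_0 = q`_0 -> eq_upto l.+1 p q.
Proof.
move=> Dp Dq Epq0; suff Epq : forall i, (i <= l)%N -> eq_upto i.+1 p q by exact: Epq.
elim=> [_ [|//] // | i IHi lt_il j].
have {}IHi := IHi (ltnW lt_il).
rewrite ltnS leq_eqVlt => /orP[/eqP-> | /IHi //].
have EGpq : (G * p)`_i = (G * q)`_i by rewrite ![G * _]mulrC (eq_uptoMr G IHi).
have := Dp i lt_il; have := Dq i lt_il; rewrite !coef_deriv EGpq => <-.
exact: pmulrnI.
Qed.

Section CycleIndex.
Variable R : numFieldType.

Definition expXn_trunc l d (c : R) : {poly R} :=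
  \sum_(j < l.+1) (c ^+ j / j`!%:R) *: 'X^(d * j).

Lemma deriv_expXn_trunc l k c :
  (expXn_trunc l k.+1 c)^`() =
  (c *+ k.+1) *: 'X^k * (expXn_trunc l k.+1 c - (c ^+ l / l`!%:R) *: 'X^(k.+1 * l)).
Proof.
rewrite /expXn_trunc [in RHS]big_ord_recr /= addrK (raddf_sum (@deriv R)) /= big_ord_recl.
rewrite derivZ derivXn /= muln0 mulr0n scaler0 add0r mulr_sumr.
apply: eq_bigr => j _; rewrite derivZ derivXn /bump leq0n add1n.
have -> : (k.+1 * j.+1).-1 = (k + k.+1 * j)%N by rewrite mulnS.
rewrite -scalerAr -scalerAl scalerA -exprD -scaler_nat scalerA; congr (_ *: _).
rewrite -mulr_natr factS natrM exprS.
by field; rewrite nat1r !pnatr_eq0 -lt0n fact_gt0.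
Qed.

(* the discarded term [x^(k + (k+1) l)] has degree at least [l] *)
Lemma logderiv_upto_expXn_trunc l k c :
  logderiv_upto l ((c *+ k.+1) *: 'X^k) (expXn_trunc l k.+1 c).
Proof.
move=> i lt_il; rewrite deriv_expXn_trunc mulrBr coefB.
suff -> : ((c *+ k.+1) *: 'X^k * ((c ^+ l / l`!%:R) *: 'X^(k.+1 * l)))`_i = 0 by rewrite subr0.
have /negbTE i_neq : i != (k + k.+1 * l)%N by lia.
by rewrite -scalerAl -scalerAr !coefZ -exprD coefXn i_neq !mulr0.
Qed.

Lemma coef0_expXn_trunc l k c : (expXn_trunc l k.+1 c)`_0 = 1.
Proof.
rewrite /expXn_trunc coef_sum big_ord_recl big1 ?addr0 => [|j _].
  by rewrite coefZ muln0 coefXn expr0 fact0 divr1 mulr1.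
by rewrite coefZ coefXn /bump /= mulr0.
Qed.

Definition cycle_index_poly l (g : nat -> R) : {poly R} :=
  \prod_(k < l) expXn_trunc l k.+1 (g k.+1 / k.+1%:R).

Definition moment_poly N : {poly R} := \prod_(1 <= n < N.+1) (1 - n%:R^-1 *: 'X).

Lemma coef0_cycle_index_poly l g : (cycle_index_poly l g)`_0 = 1.
Proof.
rewrite -horner_coef0 horner_prod big1 // => k _.
by rewrite horner_coef0 coef0_expXn_trunc.
Qed.

Lemma coef0_moment_poly N : (moment_poly N)`_0 = 1.
Proof.
rewrite -horner_coef0 horner_prod big1 // => n _.
by rewrite horner_coef0 coefB coef1 coefZ coefX mulr0 subr0.
Qed.

Lemma logderiv_upto_cycle_index_poly l g :
  logderiv_upto l (\poly_(k < l) g k.+1) (cycle_index_poly l g).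
Proof.
have -> : \poly_(k < l) g k.+1 = \sum_(k < l) ((g k.+1 / k.+1%:R) *+ k.+1) *: 'X^k.
  by rewrite poly_def; apply: eq_bigr => k _; rewrite -mulr_natr divfK ?pnatr_eq0.
by apply: logderiv_upto_prod => k _; apply: logderiv_upto_expXn_trunc.
Qed.

Lemma logderiv_upto_moment_poly l N :
  logderiv_upto l (\poly_(k < l) (- zetaN R N k.+1)) (moment_poly N).
Proof.
have -> : \poly_(k < l) (- zetaN R N k.+1) =
          \sum_(1 <= n < N.+1) \poly_(k < l) (- n%:R^-1 ^+ k.+1).
  apply/polyP => i; rewrite coef_poly coef_sum; under eq_bigr do rewrite coef_poly.
  case: ifP => _; last by rewrite big1.
  by rewrite /zetaN -sumrN; apply: eq_bigr => n _; rewrite exprVn.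
by apply: logderiv_upto_prod => n _; apply: logderiv_upto_1subZX.
Qed.

(* [bigA_distr_bigA] indexes the monomials of the expanded product by the same
   finite functions [n] as the sum defining [Zcyc]. *)
Lemma Zcyc_coef l g : Zcyc l g = l`!%:R * (cycle_index_poly l g)`_l.
Proof.
rewrite /cycle_index_poly /expXn_trunc bigA_distr_bigA /= coef_sum mulr_sumr /Zcyc.
rewrite [RHS](bigID (fun n : {ffun 'I_l -> 'I_l.+1} => \sum_(k < l) k.+1 * n k == l)%N) /=.
rewrite [X in _ = _ + X]big1 ?addr0 => [|n /negbTE n_ne]; last first.
  by rewrite prodr_scaleXn coefZ coefXn eq_sym n_ne !mulr0.
apply: eq_bigr => n n_eq; rewrite prodr_scaleXn coefZ coefXn eq_sym n_eq mulr1 -mulrA.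
congr (_ * _); rewrite -prodfV -big_split /=; apply: eq_bigr => k _.
by rewrite expr_div_n invfM; ring.
Qed.

Lemma sum_falling_ncycles N l :
  \sum_(s : {perm 'I_N}) falling ((ncycles s)%:R : R) l =
  (-1) ^+ l * N`!%:R * l`!%:R * (moment_poly N)`_l.
Proof.
elim: N l => [|N IHN] l.
  have ncycles0 (s : {perm 'I_0}) : ncycles s = 0%N.
    by apply/eqP; rewrite -leqn0 (leq_trans (leq_imset_card _ _)) ?card_ord.
  under eq_bigr do rewrite ncycles0 falling0n.
  rewrite sumr_const card_Sn /moment_poly big_geq // coef1.
  by case: l => [|l]; rewrite ?mulr0 ?mulr0n // expr0 !mul1r.
rewrite (sum_perm_ncyclesS N (fun c => falling (c%:R : R) l)) /=.
under eq_bigr do rewrite -natr1 fallingD1.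
rewrite !big_split /= sumrMnl -mulr_sumr !IHN.
have -> : moment_poly N.+1 = moment_poly N * (1 - N.+1%:R^-1 *: 'X).
  by rewrite /moment_poly big_nat_recr.
rewrite mulrBr mulr1 coefB -scalerAr coefZ coefMX.
case: l => [|l] /=; first by rewrite !mulr0 subr0 !expr0 factS natrM; ring.
rewrite !factS !natrM !exprS.
by field; rewrite nat1r pnatr_eq0.
Qed.

End CycleIndex.

Theorem theorem3p1 (R : realFieldType) (N l : nat) (hl : (1 <= l)%N) :
  Ex_unif (fun s : {perm 'I_N} => falling ((ncycles s)%:R : R) l)
  = (-1) ^+ l * Zcyc l (fun m => - zetaN R N m).
Proof.
rewrite /Ex_unif sum_falling_ncycles card_Sn Zcyc_coef.
have Ecoef : eq_upto l.+1 (cycle_index_poly l (fun m => - zetaN R N m)) (moment_poly R N).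
  apply: logderiv_upto_eq; first exact: logderiv_upto_cycle_index_poly.
    exact: logderiv_upto_moment_poly.
  by rewrite coef0_cycle_index_poly coef0_moment_poly.
rewrite Ecoef //.
have N_fact_neq0 : (N`!%:R : R) != 0 by rewrite pnatr_eq0 -lt0n fact_gt0.
by field.
Qed.
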